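(* Let $\bm{X},\bm{Y}\in\mathbb{R}^{n\times r}$ with $\bm{X}\bm{Y}^\top$ of rank $r$, and let $\bm{U}\bm{\Sigma}\bm{V}^\top$ be the compact SVD of $\bm{X}\bm{Y}^\top$. Then there exists an invertible $\bm{Q}\in\mathbb{R}^{r\times r}$ with $\bm{X}=\bm{U}\bm{\Sigma}^{1/2}\bm{Q}$ and $\bm{Y}=\bm{V}\bm{\Sigma}^{1/2}\bm{Q}^{-\top}$; moreover, if $\bm{U}_{\bm{Q}}\bm{\Sigma}_{\bm{Q}}\bm{V}_{\bm{Q}}^\top$ is the SVD of $\bm{Q}$, then $\|\bm{\Sigma}_{\bm{Q}}-\bm{\Sigma}_{\bm{Q}}^{-1}\|_{\mathrm{F}}\le\frac{1}{\sigma_{\min}(\bm{\Sigma})}\|\bm{X}^\top\bm{X}-\bm{Y}^\top\bm{Y}\|_{\mathrm{F}}$. In particular, if $\bm{X}^\top\bm{X}=\bm{Y}^\top\bm{Y}$ then $\bm{Q}$ is an orthogonal matrix.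
   Context: $\sigma_{\min}(\bm{\Sigma})$ denotes the smallest diagonal entry of $\bm{\Sigma}$. *)

(* Real numbers are modelled by an arbitrary real closed field
   R : rcfType (purely algebraic statement; needs square roots only). *)
From HB Require Import structures.
From mathcomp Require Import all_boot all_order all_algebra.
Set Implicit Arguments. Unset Strict Implicit. Unset Printing Implicit Defensive.
Import Order.TTheory GRing.Theory Num.Theory.
Local Open Scope ring_scope.

Definition frob (R : rcfType) m n (A : 'M[R]_(m, n)) : R :=
  Num.sqrt (\sum_(i < m) \sum_(j < n) A i j ^+ 2).

Definition orthonormal_cols (R : rcfType) m n (A : 'M[R]_(m, n)) : Prop :=
  A^T *m A = 1%:M.

Definition orthogonal_mx (R : rcfType) n (A : 'M[R]_n) : Prop :=
  A^T *m A = 1%:M /\ A *m A^T = 1%:M.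

Definition sv_diag (R : rcfType) r (S : 'M[R]_r) : Prop :=
  is_diag_mx S /\ (forall i : 'I_r, 0 <= S i i) /\
  (forall i j : 'I_r, (i <= j)%N -> S j j <= S i i).

Definition compact_svd (R : rcfType) m n r (A : 'M[R]_(m, n))
  (U : 'M[R]_(m, r)) (S : 'M[R]_r) (V : 'M[R]_(n, r)) : Prop :=
  orthonormal_cols U /\ orthonormal_cols V /\ sv_diag S /\
  (forall i : 'I_r, 0 < S i i) /\ A = U *m S *m V^T.

Definition svd_sq (R : rcfType) r (Q UQ SQ VQ : 'M[R]_r) : Prop :=
  orthogonal_mx UQ /\ orthogonal_mx VQ /\ sv_diag SQ /\ Q = UQ *m SQ *m VQ^T.

Definition diag_sqrt (R : rcfType) r (S : 'M[R]_r) : 'M[R]_r :=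
  diag_mx (\row_i Num.sqrt (S i i)).

Definition sigma_min (R : rcfType) r (S : 'M[R]_r.+1) : R :=
  \big[Order.min/S 0 0]_(i < r.+1) S i i.

From HB Require Import structures.
From mathcomp Require Import all_boot all_order all_algebra ring lra.
Import Order.TTheory GRing.Theory Num.Theory.
Local Open Scope ring_scope.
Set Implicit Arguments. Unset Strict Implicit. Unset Printing Implicit Defensive.

(* Put T := S^{1/2}.  Since U^T U = V^T V = 1 and S is invertible, the
   matrix K := Y^T V is invertible with X = U S K^-1 and Y = V K^T, so
   Q := T K^-1 gives X = U T Q and Y = V T Q^-T.  Consequently
   X^T X = Q^T S Q and Y^T Y = Q^-1 S Q^-T.

   - Bound: writing Q = UQ D VQ^T, the gap X^T X - Y^T Y is an orthogonal
     conjugate of D M D - D^-1 M D^-1 with M = UQ^T S UQ, whose diagonal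
     entries are M_ii (d_i^2 - d_i^-2) with M_ii >= sigma_min S; the
     scalar inequality |d - 1/d| <= (M_ii/sigma_min) |d^2 - 1/d^2| and the
     fact that dropping off-diagonal entries decreases the Frobenius norm
     give the estimate.
   - Orthogonality: if Q^T S Q = Q^-1 S Q^-T then P := Q Q^T satisfies
     P S P = S; a trace comparison then shows ||Q - Q^-T||_F = 0. *)

Section SumOfSquares.
Variable R : rcfType.

Definition sumsq m n (A : 'M[R]_(m, n)) : R := \sum_i \sum_j A i j ^+ 2.

Lemma frobE m n (A : 'M[R]_(m, n)) : frob A = Num.sqrt (sumsq A).
Proof. by []. Qed.

Lemma sumsq_tr m n (A : 'M[R]_(m, n)) : sumsq A = \tr (A *m A^T).
Proof.
apply: eq_bigr => i _; rewrite mxE.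
by apply: eq_bigr => j _; rewrite mxE expr2.
Qed.

Lemma sumsq_ge0 m n (A : 'M[R]_(m, n)) : 0 <= sumsq A.
Proof. by apply: sumr_ge0 => i _; apply: sumr_ge0 => j _; apply: sqr_ge0. Qed.

Lemma sumsq_eq0 m n (A : 'M[R]_(m, n)) : sumsq A = 0 -> A = 0.
Proof.
move=> A0; apply/matrixP => i j; rewrite mxE.
have row0 : \sum_j A i j ^+ 2 = 0.
  by apply: (psumr_eq0P _ A0) => // k _; apply: sumr_ge0 => l _; apply: sqr_ge0.
have /eqP := psumr_eq0P (fun j _ => sqr_ge0 (A i j)) row0 (i := j) isT.
by rewrite sqrf_eq0 => /eqP.
Qed.

Lemma sumsqB m n (A B : 'M[R]_(m, n)) :
  sumsq (A - B) = \tr (A *m A^T) - 2%:R * \tr (A *m B^T) + \tr (B *m B^T).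
Proof.
have tr_sym : \tr (B *m A^T) = \tr (A *m B^T).
  by rewrite -mxtrace_tr trmx_mul trmxK.
rewrite sumsq_tr linearB /= mulmxBl !mulmxBr !linearB /= tr_sym; ring.
Qed.

Lemma sumsq_orth_conj n (V B : 'M[R]_n) : orthogonal_mx V ->
  sumsq (V *m B *m V^T) = sumsq B.
Proof.
case=> VtV VVt; rewrite !sumsq_tr !trmx_mul trmxK.
rewrite -!mulmxA (mulmxA V^T V) VtV mul1mx.
by rewrite mxtrace_mulC -!mulmxA VtV mulmx1.
Qed.

Lemma sumsq_diag n (d : 'rV[R]_n) : sumsq (diag_mx d) = \sum_i d 0 i ^+ 2.
Proof.
apply: eq_bigr => i _; rewrite (bigD1 i) //= big1 => [|j ji].
  by rewrite !mxE eqxx mulr1n addr0.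
by rewrite !mxE eq_sym (negbTE ji) mulr0n expr0n.
Qed.

Lemma sumsq_ge_diag n (B : 'M[R]_n) : \sum_i B i i ^+ 2 <= sumsq B.
Proof.
apply: ler_sum => i _; rewrite (bigD1 i) //= lerDl.
by apply: sumr_ge0 => j _; apply: sqr_ge0.
Qed.

End SumOfSquares.

Section MatrixFacts.
Variable R : rcfType.

Lemma invmx_right n (A B : 'M[R]_n) : A *m B = 1%:M -> invmx A = B.
Proof.
move=> AB; have [uA _] := mulmx1_unit AB.
by rewrite -[invmx A]mulmx1 -AB mulmxA mulVmx // mul1mx.
Qed.

Lemma diag_mx_of_diag n (S : 'M[R]_n) : is_diag_mx S -> S = diag_mx (\row_i S i i).
Proof.
move/is_diag_mxP=> Sdiag; apply/matrixP => i j; rewrite !mxE.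
by case: (eqVneq i j) => [->|ne]; rewrite ?mulr1n // mulr0n Sdiag.
Qed.

Lemma invmx_diag n (d : 'rV[R]_n) : (forall i, d 0 i != 0) ->
  invmx (diag_mx d) = diag_mx (\row_i (d 0 i)^-1).
Proof.
move=> dnz; apply: invmx_right; rewrite mulmx_diag -diag_const_mx.
by congr diag_mx; apply/matrixP => i j; rewrite !mxE divff.
Qed.

Lemma unitmx_diagP n (d : 'rV[R]_n) :
  reflect (forall i, d 0 i != 0) (diag_mx d \in unitmx).
Proof.
rewrite unitmxE det_diag unitfE.
by apply: (iffP (prodf_neq0 _ _)) => dnz i //; apply: dnz.
Qed.

Lemma diag_sqrtK n (S : 'M[R]_n) : is_diag_mx S -> (forall i, 0 <= S i i) ->
  diag_sqrt S *m diag_sqrt S = S.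
Proof.
move=> Sdiag Sge0; rewrite [RHS](diag_mx_of_diag Sdiag) mulmx_diag.
congr diag_mx.
by apply/matrixP => i j; rewrite !mxE -expr2 sqr_sqrtr.
Qed.

Lemma gram_orthonormal m n p (U : 'M[R]_(m, n)) (A : 'M[R]_(n, p)) :
  orthonormal_cols U -> (U *m A)^T *m (U *m A) = A^T *m A.
Proof.
by move=> UtU; rewrite trmx_mul -mulmxA (mulmxA U^T) UtU mul1mx.
Qed.

Lemma gram_balanced m n p (U : 'M[R]_(m, n)) (T : 'M[R]_n) (Q : 'M[R]_(n, p)) :
  orthonormal_cols U -> T^T = T ->
  (U *m T *m Q)^T *m (U *m T *m Q) = Q^T *m (T *m T) *m Q.
Proof.
move=> UtU T_sym; rewrite -mulmxA gram_orthonormal //.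
by rewrite trmx_mul T_sym !mulmxA.
Qed.

End MatrixFacts.

Section BalancedFactorization.
Variables (R : rcfType) (m r : nat).
Variables (X Y U V : 'M[R]_(m, r)) (S T : 'M[R]_r).
Hypotheses (UtU : orthonormal_cols U) (VtV : orthonormal_cols V).
Hypotheses (T_unit : T \in unitmx) (T_sym : T^T = T) (TT : T *m T = S).
Hypothesis XYt : X *m Y^T = U *m S *m V^T.

Lemma svd_factor_core :
  let K := Y^T *m V in
  K \in unitmx /\ X = U *m S *m invmx K /\ Y = V *m K^T.
Proof.
move=> K.
have XK : X *m K = U *m S by rewrite mulmxA XYt -mulmxA VtV mulmx1.
have S_unit : S \in unitmx by rewrite -TT unitmx_mul T_unit.
have K_unit : K \in unitmx.
  have SE : S = U^T *m X *m K by rewrite -mulmxA XK mulmxA UtU mul1mx.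
  by move: S_unit; rewrite SE unitmx_mul => /andP[].
have XE : X = U *m S *m invmx K by rewrite -XK mulmxK.
have YtE : Y^T = K *m V^T.
  have SVt : S *m invmx K *m Y^T = S *m V^T.
    have := congr1 (mulmx U^T) XYt.
    by rewrite {1}XE !mulmxA UtU !mul1mx.
  have KYt : invmx K *m Y^T = V^T.
    by rewrite -(mulKmx S_unit (invmx K *m Y^T)) (mulmxA S) SVt mulKmx.
  by rewrite -KYt mulKVmx.
by split=> //; split=> //; rewrite -[Y]trmxK YtE trmx_mul trmxK.
Qed.

Lemma balanced_factor : exists2 Q : 'M[R]_r, Q \in unitmx &
  X = U *m T *m Q /\ Y = V *m T *m (invmx Q)^T.
Proof.
have [K_unit [XE YE]] := svd_factor_core.
set K := Y^T *m V in K_unit XE YE.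
exists (T *m invmx K); first by rewrite unitmx_mul T_unit unitmx_inv.
split; first by rewrite XE -TT !mulmxA.
have -> : invmx (T *m invmx K) = K *m invmx T.
  by apply: invmx_right; rewrite -mulmxA (mulmxA (invmx K)) mulVmx // mul1mx mulmxV.
by rewrite trmx_mul trmx_inv T_sym mulmxA -(mulmxA V) mulmxV // mulmx1.
Qed.

End BalancedFactorization.

Section Orthogonality.
Variables (R : rcfType) (n : nat).
Implicit Types (P Q S T C : 'M[R]_n).

Lemma sumsq_sub_invT Q : Q \in unitmx ->
  sumsq (Q - (invmx Q)^T) =
  \tr (Q *m Q^T) + \tr (invmx (Q *m Q^T)) - 2%:R * n%:R.
Proof.
move=> Q_unit; have inv_gram : invmx (Q *m Q^T) = (invmx Q)^T *m invmx Q.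
  apply: invmx_right; rewrite -mulmxA (mulmxA Q^T) -trmx_mul mulVmx //.
  by rewrite trmx1 mul1mx mulmxV.
rewrite sumsqB !trmxK mulmxV // mxtrace1 inv_gram; ring.
Qed.

Lemma sumsq_sub1_orth C : C *m C^T = 1%:M ->
  sumsq (C - 1%:M) = 2%:R * (n%:R - \tr C).
Proof.
move=> CCt; rewrite sumsqB CCt trmx1 mulmx1 mulmx1 mxtrace1; ring.
Qed.

(* If P S P = S with S invertible then P^-1 = S P S^-1 has the trace of P. *)
Lemma trace_invmx_fixed P S : S \in unitmx -> P *m S *m P = S ->
  \tr (invmx P) = \tr P.
Proof.
move=> S_unit PSP; have -> : invmx P = S *m P *m invmx S.
  by apply: invmx_right; rewrite !mulmxA PSP mulmxV.
by rewrite mxtrace_mulC mulmxA mulVmx // mul1mx.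
Qed.

(* Balanced Gram matrices force orthogonality: if S = T^2 with T symmetric
   invertible and Q^T S Q = Q^-1 S Q^-T, then P := Q Q^T satisfies P S P = S;
   then C := T^-1 P T satisfies C C^T = 1 and tr C = tr P, so tr P <= n, while
   tr P^-1 = tr P forces tr P >= n.  Hence ||Q - Q^-T|| = 0. *)
Lemma orthogonal_of_balanced_gram Q T :
  Q \in unitmx -> T \in unitmx -> T^T = T ->
  Q^T *m (T *m T) *m Q = invmx Q *m (T *m T) *m (invmx Q)^T ->
  orthogonal_mx Q.
Proof.
move=> Q_unit T_unit T_sym; move TT: (T *m T) => S gramE.
set P := Q *m Q^T.
have S_unit : S \in unitmx by rewrite -TT unitmx_mul T_unit.
have PSP : P *m S *m P = S.
  have -> : P *m S *m P = Q *m (Q^T *m S *m Q) *m Q^T by rewrite /P !mulmxA.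
  rewrite gramE !mulmxA mulmxV // mul1mx -mulmxA -trmx_mul mulmxV //.
  by rewrite trmx1 mulmx1.
have P_sym : P^T = P by rewrite /P trmx_mul trmxK.
have trPinv : \tr (invmx P) = \tr P := trace_invmx_fixed S_unit PSP.
have PE : Q *m Q^T = P by [].
clearbody P.
pose C := invmx T *m P *m T.
have CCt : C *m C^T = 1%:M.
  rewrite /C !trmx_mul trmx_inv T_sym P_sym.
  rewrite -!mulmxA (mulmxA T T) TT (mulmxA S) (mulmxA P) (mulmxA P S P) PSP.
  by rewrite -TT mulmxK // mulVmx.
have trC : \tr C = \tr P by rewrite /C mxtrace_mulC mulmxA mulmxV // mul1mx.
have trP_le : \tr P <= n%:R.
  by have := sumsq_ge0 (C - 1%:M); rewrite sumsq_sub1_orth // trC => ?; lra.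
have dist0 : sumsq (Q - (invmx Q)^T) = 0.
  have := sumsq_ge0 (Q - (invmx Q)^T).
  rewrite sumsq_sub_invT // PE trPinv => ?; lra.
have QE : Q = (invmx Q)^T by apply/eqP; rewrite -subr_eq0 (sumsq_eq0 dist0).
have QtE : Q^T = invmx Q by rewrite {1}QE trmxK.
by split; rewrite QtE ?mulVmx ?mulmxV.
Qed.

End Orthogonality.

Section GramGapBound.
Variable R : rcfType.

(* Scalar core of the bound: for d > 0, |d - 1/d| <= (m/s) |d^2 - 1/d^2|
   whenever 0 < s <= m, because d + 1/d >= 2 >= 1. *)
Lemma sub_inv_le_scaled (s m d e : R) : 0 < s -> s <= m -> 0 < d -> d * e = 1 ->
  (d - e) ^+ 2 <= s^-1 ^+ 2 * (m * (d ^+ 2 - e ^+ 2)) ^+ 2.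
Proof.
move=> s_gt0 s_le_m d_gt0 de1.
have e_gt0 : 0 < e by nra.
have scaled : s ^+ 2 * (d - e) ^+ 2 <= (m * (d ^+ 2 - e ^+ 2)) ^+ 2.
  have -> : (m * (d ^+ 2 - e ^+ 2)) ^+ 2 = m ^+ 2 * (d + e) ^+ 2 * (d - e) ^+ 2.
    by ring.
  apply: ler_wpM2r; first exact: sqr_ge0.
  have sm2 : s ^+ 2 <= m ^+ 2 by nra.
  have de2 : 1 <= (d + e) ^+ 2 by nra.
  nra.
by rewrite exprVn mulrC ler_pdivlMr ?exprn_gt0 // mulrC.
Qed.

Lemma diag_conj_ii n (d : 'rV[R]_n) (M : 'M[R]_n) i :
  (diag_mx d *m M *m diag_mx d) i i = M i i * d 0 i ^+ 2.
Proof. by rewrite mul_mx_diag mxE mul_diag_mx mxE mulrAC mulrC expr2. Qed.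

Lemma orthonormal_conj_diag_ge m n (U : 'M[R]_(m, n)) (s : 'rV[R]_m) (sg : R) :
  orthonormal_cols U -> (forall k, sg <= s 0 k) ->
  forall i, sg <= (U^T *m diag_mx s *m U) i i.
Proof.
move=> UtU s_ge i.
have col_norm : \sum_k U k i ^+ 2 = 1.
  have := congr1 (fun A : 'M[R]_n => A i i) UtU; rewrite /= !mxE eqxx mulr1n => <-.
  by apply: eq_bigr => k _; rewrite mxE expr2.
rewrite -[sg]mulr1 -col_norm mul_mx_diag !mxE mulr_sumr; apply: ler_sum => k _.
rewrite !mxE; have := s_ge k; have := sqr_ge0 (U k i); nra.
Qed.

Lemma svd_gram_gap n (Q UQ D VQ A : 'M[R]_n) :
  Q \in unitmx -> svd_sq Q UQ D VQ ->
  Q^T *m A *m Q - invmx Q *m A *m (invmx Q)^T =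
  VQ *m (D *m (UQ^T *m A *m UQ) *m D
         - invmx D *m (UQ^T *m A *m UQ) *m invmx D) *m VQ^T.
Proof.
move=> Q_unit [[_ UQUQt] [[VQtVQ _] [[D_diag _] QE]]].
have D_unit : D \in unitmx.
  by move: Q_unit; rewrite QE !unitmx_mul => /andP[/andP[]].
have D_sym : D^T = D by rewrite (diag_mx_of_diag D_diag) tr_diag_mx.
have invQE : invmx Q = VQ *m invmx D *m UQ^T.
  apply: invmx_right; rewrite QE -!mulmxA (mulmxA VQ^T) VQtVQ mul1mx.
  by rewrite (mulmxA D) mulmxV // mul1mx.
rewrite invQE QE !trmx_mul !trmxK trmx_inv D_sym mulmxBr mulmxBl.
by congr (_ - _); rewrite !mulmxA.
Qed.

Lemma diag_gap_bound n (d : 'rV[R]_n) (M : 'M[R]_n) (sg : R) :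
  0 < sg -> (forall i, 0 < d 0 i) -> (forall i, sg <= M i i) ->
  frob (diag_mx d - invmx (diag_mx d)) <= sg^-1 *
    frob (diag_mx d *m M *m diag_mx d - invmx (diag_mx d) *m M *m invmx (diag_mx d)).
Proof.
move=> sg_gt0 d_gt0 M_ge; set D := diag_mx d.
have d_neq0 i : d 0 i != 0 by rewrite gt_eqF.
set B := _ - invmx D *m M *m invmx D.
have gapE : D - invmx D = diag_mx (\row_i (d 0 i - (d 0 i)^-1)).
  by rewrite /D invmx_diag //; apply/matrixP => i j; rewrite !mxE mulrnBl.
have sgV_ge0 : 0 <= sg^-1 by rewrite invr_ge0 ltW.
rewrite !frobE -[sg^-1]ger0_norm // -sqrtr_sqr -sqrtrM ?sqr_ge0 //.
apply: ler_wsqrtr; rewrite gapE sumsq_diag.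
apply: (le_trans _ (ler_wpM2l (sqr_ge0 _) (sumsq_ge_diag B))).
rewrite mulr_sumr; apply: ler_sum => i _.
have Bii : B i i = M i i * (d 0 i ^+ 2 - (d 0 i)^-1 ^+ 2).
  rewrite /B /D invmx_diag // [LHS]mxE [X in _ + X]mxE !diag_conj_ii mxE.
  by rewrite mulrBr.
rewrite Bii mxE; apply: sub_inv_le_scaled => //; exact: divff.
Qed.

Lemma gram_gap_bound n (Q UQ D VQ A : 'M[R]_n) (sg : R) :
  Q \in unitmx -> svd_sq Q UQ D VQ ->
  is_diag_mx A -> 0 < sg -> (forall k, sg <= A k k) ->
  frob (D - invmx D) <= sg^-1 *
    frob (Q^T *m A *m Q - invmx Q *m A *m (invmx Q)^T).
Proof.
move=> Q_unit svdQ A_diag sg_gt0 A_ge.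
have [[UQtUQ _] [VQ_orth [[D_diag [D_ge0 _]] QE]]] := svdQ.
have D_neq0 i : D i i != 0.
  have : D \in unitmx by move: (Q_unit); rewrite QE !unitmx_mul => /andP[/andP[]].
  by rewrite {1}(diag_mx_of_diag D_diag) => /unitmx_diagP /(_ i); rewrite mxE.
rewrite (svd_gram_gap _ Q_unit svdQ) !frobE sumsq_orth_conj // -!frobE.
rewrite (diag_mx_of_diag D_diag); apply: diag_gap_bound => // [i|].
  by rewrite mxE lt_def D_neq0 D_ge0.
rewrite (diag_mx_of_diag A_diag); apply: (orthonormal_conj_diag_ge UQtUQ) => k.
by rewrite mxE.
Qed.

End GramGapBound.

Section SigmaMin.
Variables (R : rcfType) (r : nat) (S : 'M[R]_r.+1).

Lemma sigma_min_le i : sigma_min S <= S i i.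
Proof. exact: bigmin_le. Qed.

Lemma sigma_min_gt0 : (forall i, 0 < S i i) -> 0 < sigma_min S.
Proof. by move=> S_gt0; apply: lt_bigmin. Qed.

End SigmaMin.

(* Lemma 20. *)
Theorem lemma20 (R : rcfType) (n r : nat) (X Y : 'M[R]_(n, r.+1))
  (U : 'M[R]_(n, r.+1)) (S : 'M[R]_r.+1) (V : 'M[R]_(n, r.+1)) :
  \rank (X *m Y^T) = r.+1 ->
  compact_svd (X *m Y^T) U S V ->
  exists Q : 'M[R]_r.+1,
    Q \in unitmx /\
    X = U *m diag_sqrt S *m Q /\
    Y = V *m diag_sqrt S *m (invmx Q)^T /\
    (forall UQ SQ VQ : 'M[R]_r.+1, svd_sq Q UQ SQ VQ ->
       frob (SQ - invmx SQ) <= (sigma_min S)^-1 * frob (X^T *m X - Y^T *m Y)) /\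
    (X^T *m X = Y^T *m Y -> orthogonal_mx Q).
Proof.
move=> _ [UtU [VtV [[S_diag [S_ge0 _]] [S_gt0 XYt]]]].
set T := diag_sqrt S.
have T_sym : T^T = T by rewrite tr_diag_mx.
have TT : T *m T = S by apply: diag_sqrtK.
have T_unit : T \in unitmx.
  by apply/unitmx_diagP => i; rewrite mxE gt_eqF // sqrtr_gt0.
have [Q Q_unit [XE YE]] := balanced_factor UtU VtV T_unit T_sym TT XYt.
have XtX : X^T *m X = Q^T *m S *m Q by rewrite XE gram_balanced // TT.
have YtY : Y^T *m Y = invmx Q *m S *m (invmx Q)^T.
  by rewrite YE gram_balanced // TT trmxK.
exists Q; do 3!split => //; split.
- move=> UQ SQ VQ svdQ; rewrite XtX YtY.
  apply: gram_gap_bound svdQ S_diag _ (sigma_min_le S) => //.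
  exact: sigma_min_gt0.
- by rewrite XtX YtY -TT; apply: orthogonal_of_balanced_gram.
Qed.
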